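(* Let $q$ be a prime power, $m\ge2$, $1\le k<n$, and let $X\in \mathbb{F}_{q^m}^{k\times (n-k)}$ be chosen uniformly at random. Then $$\Pr\big(\mathrm{rs}[\,I_k\mid X\,] \text{ is a generalized Gabidulin code}\big)\leq \phi(m)\,q^{-(m-1)(n-k-1)(k-1)},$$ where $\phi$ is Euler's totient function.
   Context: $\mathrm{rs}$ denotes $\mathbb{F}_{q^m}$-row space. For $s$ coprime to $m$ and $g_1,\dots,g_n\in\mathbb{F}_{q^m}$ linearly independent over $\mathbb{F}_q$, the generalized Gabidulin code of dimension $k$ with parameter $s$ is the row space of the $k\times n$ matrix with $(i,j)$ entry $g_j^{q^{s(i-1)}}$; a generalized Gabidulin code is such a code for some such $s$ and $g_1,\dots,g_n$. *)

From HB Require Import structures.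
From mathcomp Require Import all_boot all_order all_algebra all_field.
Set Implicit Arguments. Unset Strict Implicit. Unset Printing Implicit Defensive.
Import Order.TTheory GRing.Theory Num.Theory.
Local Open Scope ring_scope.

Definition prime_power (q : nat) : Prop :=
  exists p e : nat, prime p /\ (0 < e)%N /\ q = (p ^ e)%N.

(* Elements of the subfield F_q of F = F_{q^m}: the fixed points of x |-> x^q. *)
Definition in_Fq (F : finFieldType) (q : nat) (x : F) : bool := x ^+ q == x.

Definition Fq_lin_indep (F : finFieldType) (q n : nat) (g : 'I_n -> F) : Prop :=
  forall c : 'I_n -> F, (forall j, in_Fq q (c j)) ->
    \sum_(j < n) c j * g j = 0 -> forall j, c j = 0.

(* generator matrix of the generalized Gabidulin code: (i,j) entry g_j^{q^{s i}}
   (0-based i, i.e. q^{s(i-1)} with 1-based i) *)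
Definition gab_mx (F : finFieldType) (q s k n : nat) (g : 'I_n -> F) : 'M[F]_(k, n) :=
  \matrix_(i < k, j < n) g j ^+ (q ^ (s * i)).

Definition is_gen_gabidulin (F : finFieldType) (q m k n : nat) (M : 'M[F]_(k, n)) : Prop :=
  exists (s : nat) (g : 'I_n -> F),
    coprime s m /\ Fq_lin_indep q g /\ (M == gab_mx q s k g)%MS.

(** A generalized Gabidulin code with parameter [s] only depends on [s mod m],
    since the Frobenius [x |-> x^q] has order [m] on [F_{q^m}], and it does not
    change when [g] is scaled by a non-zero constant.  Hence every systematic
    generator matrix [[I_k | X]] of such a code is determined by a residue
    [s] coprime to [m] and a vector [g] with [g_0 = 1]: there are at most
    [phi(m) q^(m(n-1))] of them among the [q^(mk(n-k))] matrices [X], and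
    [m k (n-k) - m (n-1) = m (k-1) (n-k-1)], a slightly stronger bound than
    the one claimed. *)

From HB Require Import structures.
From mathcomp Require Import all_boot all_order all_algebra all_field.
From mathcomp Require Import zify.
Set Implicit Arguments. Unset Strict Implicit. Unset Printing Implicit Defensive.
Import Order.TTheory GRing.Theory Num.Theory.
Local Open Scope ring_scope.

Lemma card_ffun_fixed (I T : finType) (i0 : I) (a : T) :
  #|[set f : {ffun I -> T} | f i0 == a]| = (#|T| ^ #|I|.-1)%N.
Proof.
pose D := fun i : I => if i == i0 then pred1 a else predT.
have -> : #|[set f : {ffun I -> T} | f i0 == a]| = #|family D|.
  apply: eq_card => f; rewrite inE; apply/eqP/familyP.
    by move=> fa i; rewrite /D; case: eqP => // ->; rewrite inE fa.
  by move=> /(_ i0); rewrite /D eqxx inE => /eqP.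
rewrite card_family foldrE big_map big_enum /= (bigD1 i0) //= /D eqxx card1 mul1n.
rewrite (eq_bigr (fun _ => #|T|)); last by move=> i /negbTE ->; rewrite cardT.
by rewrite prod_nat_const cardC1.
Qed.

Lemma card_coprime_ord m : #|[set a : 'I_m | coprime a m]| = totient m.
Proof.
rewrite totient_count_coprime big_mkord -sum1_card.
rewrite (big_mkcond (fun i => i \in _)) /=; apply: eq_bigr => i _.
by rewrite inE coprime_sym; case: coprime.
Qed.

Lemma card_le_param (A B : finType) (T : {set A}) (S : {set B}) (R : A -> B -> bool) :
  (forall X, X \in S -> exists2 p, p \in T & R p X) ->
  (forall p X Y, R p X -> R p Y -> X = Y) ->
  (#|S| <= #|T|)%N.
Proof.
move=> param uniqR; rewrite -(card_imset S (@Some_inj _)).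
apply: leq_trans (subset_leq_card _) (leq_imset_card (fun p => [pick X | R p X]) T).
apply/subsetP => _ /imsetP [X /param [p pT RpX] ->]; apply/imsetP; exists p => //.
by case: pickP => [Y RpY | /(_ X)]; [rewrite (uniqR _ _ _ RpY RpX) | rewrite RpX].
Qed.

Lemma eqmx_row_mx1_inj (F : fieldType) k r (X Y : 'M[F]_(k, r)) :
  (row_mx 1%:M X == row_mx 1%:M Y)%MS -> X = Y.
Proof.
case/andP=> /submxP [D] + _.
by rewrite mul_mx_row mulmx1 => /eq_row_mx [<- ->]; rewrite mul1mx.
Qed.

Lemma prime_power_gt1 q : prime_power q -> (1 < q)%N.
Proof.
by move=> [p [e [pr [e0 ->]]]]; rewrite -(exp1n e) ltn_exp2r // prime_gt1.
Qed.

Section Frobenius.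

Variables (F : finFieldType) (q m : nat).
Hypothesis cardF : #|F| = (q ^ m)%N.

Lemma expr_qXmul_card (x : F) t : x ^+ (q ^ (m * t)) = x.
Proof.
elim: t => [|t IHt]; first by rewrite muln0 expr1.
by rewrite mulnS expnD exprM -cardF expf_card.
Qed.

Lemma expr_qX_modn (x : F) s i : x ^+ (q ^ (s * i)) = x ^+ (q ^ (s %% m * i)).
Proof.
rewrite {1}(divn_eq s m) mulnDl [(_ * m * i)%N]mulnAC mulnC expnD mulnC exprM.
exact: expr_qXmul_card.
Qed.

Lemma gab_mx_modn s k n (g : 'I_n -> F) : gab_mx q (s %% m) k g = gab_mx q s k g.
Proof. by apply/matrixP => i j; rewrite !mxE -expr_qX_modn. Qed.

End Frobenius.

Lemma gab_mx_scale (F : finFieldType) q s k n (c : F) (g : 'I_n -> F) :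
  c != 0 -> (gab_mx q s k (fun j => (c * g j)%R) :=: gab_mx q s k g)%MS.
Proof.
move=> c0; pose d := \row_(i < k) c ^+ (q ^ (s * i)).
have -> : gab_mx q s k (fun j => c * g j) = diag_mx d *m gab_mx q s k g.
  by apply/matrixP => i j; rewrite mul_diag_mx !mxE exprMn.
apply: eqmxMfull; rewrite row_full_unit unitmxE det_diag unitfE.
by apply/prodf_neq0 => i _; rewrite mxE expf_neq0.
Qed.

Lemma Fq_lin_indep_neq0 (F : finFieldType) q n (g : 'I_n -> F) (i0 : 'I_n) :
  (0 < q)%N -> Fq_lin_indep q g -> g i0 != 0.
Proof.
move=> q0 indep; apply/eqP => g0.
have inFq j : in_Fq q ((j == i0)%:R : F).
  by rewrite /in_Fq; case: (j == i0); rewrite ?expr1n ?expr0n ?gtn_eqF.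
have sum0 : \sum_(j < n) (j == i0)%:R * g j = 0 :> F.
  by rewrite (bigD1 i0) //= g0 mulr0 add0r big1 // => j /negbTE ->; rewrite mul0r.
by move: (indep _ inFq sum0 i0); rewrite eqxx => /eqP; rewrite oner_eq0.
Qed.

Lemma card_systematic_gen_gabidulin (F : finFieldType) q m k r
    (S : {set 'M[F]_(k, r)}) :
  (0 < q)%N -> #|F| = (q ^ m)%N -> (0 < m)%N -> (0 < k)%N ->
  (forall X, X \in S -> is_gen_gabidulin q m (row_mx (1%:M : 'M[F]_k) X)) ->
  (#|S| <= totient m * #|F| ^ (k + r).-1)%N.
Proof.
move=> q0 cardF m0 k0 gabS; have n0 : (0 < k + r)%N by rewrite addn_gt0 k0.
pose i0 : 'I_(k + r) := Ordinal n0.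
pose T := setX [set a : 'I_m | coprime a m] [set g : {ffun 'I_(k + r) -> F} | g i0 == 1].
rewrite -(card_ord (k + r)) -(card_ffun_fixed i0 (1 : F)) -card_coprime_ord -cardsX -/T.
apply: (@card_le_param _ _ T S (fun p X => row_mx 1%:M X == gab_mx q p.1 k p.2)%MS).
  move=> X /gabS [s [g [cop_sm [indep eqX]]]].
  have g0 : g i0 != 0 := Fq_lin_indep_neq0 i0 q0 indep.
  pose g1 := [ffun j => (g i0)^-1 * g j].
  exists (Ordinal (ltn_pmod s m0), g1).
    by rewrite !inE /= coprime_modl cop_sm ffunE mulVf ?eqxx.
  apply/eqmxP; apply: eqmx_trans (eqmxP eqX) _ => /=.
  have -> : gab_mx q (s %% m) k g1 = gab_mx q s k (fun j => (g i0)^-1 * g j).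
    by rewrite (gab_mx_modn cardF); apply/matrixP => i j; rewrite !mxE ffunE.
  by apply/eqmx_sym/gab_mx_scale; rewrite invr_neq0.
move=> p X Y /eqmxP eqX /eqmxP eqY.
by apply: eqmx_row_mx1_inj; apply/eqmxP; exact: eqmx_trans eqX (eqmx_sym eqY).
Qed.

Lemma muln_predD k r : (0 < k)%N -> (0 < r)%N ->
  (k * r = (k + r).-1 + (k - 1) * (r - 1))%N.
Proof. by case: k => // k; case: r => // r _ _; rewrite !subn1 /=; nia. Qed.

Lemma card_ratio_le (N phi q m k r : nat) : (0 < q)%N -> (0 < k)%N -> (0 < r)%N ->
  (N <= phi * (q ^ m) ^ (k + r).-1)%N ->
  (N%:R / ((q ^ m) ^ (k * r))%:R : rat) <= phi%:R * q%:R ^- (m * ((k - 1) * (r - 1))).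
Proof.
move=> q0 k0 r0 leN; have qr0 : q%:R != 0 :> rat by rewrite pnatr_eq0 -lt0n.
rewrite ler_pdivrMr ?ltr0n ?expn_gt0 ?q0 // (muln_predD k0 r0) expnD -expnM.
rewrite natrM !natrX -exprM [_ * q%:R ^+ (m * _)]mulrC mulrA mulfVK ?expf_neq0 //.
by rewrite -natrX -natrM ler_nat expnM.
Qed.

Theorem theorem4p11 (F : finFieldType) (q m k r : nat) :
  prime_power q -> #|F| = (q ^ m)%N -> (2 <= m)%N -> (1 <= k)%N -> (1 <= r)%N ->
  forall S : {set 'M[F]_(k, r)},
    (forall X : 'M[F]_(k, r),
        X \in S <-> is_gen_gabidulin q m (row_mx (1%:M : 'M[F]_k) X)) ->
    (#|S|%:R / #|{: 'M[F]_(k, r)}|%:R : rat)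
      <= (totient m)%:R * (q%:R) ^- ((m - 1) * (r - 1) * (k - 1)).
Proof.
move=> /prime_power_gt1 q1 cardF m2 k1 r1 S gabS.
have cardS := card_systematic_gen_gabidulin (ltnW q1) cardF (ltnW m2) k1
  (fun X => proj1 (gabS X)).
rewrite cardF in cardS; rewrite card_mx cardF.
apply: le_trans (card_ratio_le (ltnW q1) k1 r1 cardS) _.
have q0R : 0 < q%:R :> rat by rewrite ltr0n ltnW.
rewrite ler_wpM2l // lef_pV2 ?posrE ?exprn_gt0 //.
apply: ler_weXn2l; first by rewrite ler1n ltnW.
by rewrite -mulnA [(_ * (k - 1))%N]mulnC leq_mul2r leq_subr orbT.
Qed.
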